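(* Let $P$ be a propositional variable and $T$ a closed term with $\vdash T:\perp\to P$. Then for every term $t$ and every $\bar u\in\mathcal{E}^{<\omega}$, $((T\ t)\ \bar u)\triangleright^*\underline{\mu}.t$, i.e. $((T\ t)\ \bar u)$ reduces to some element of $M_t$.
   Context: Formulas are built from propositional variables and $\perp$ using $\to,\wedge,\vee$. Terms $\mathcal{T}$ and $\mathcal{E}$-terms: with disjoint sets $\mathcal{X}$ ($\lambda$-variables) and $\mathcal{A}$ ($\mu$-variables), $\mathcal{T} ::= x \mid \lambda x.\mathcal{T} \mid (\mathcal{T}\ \mathcal{E}) \mid \langle \mathcal{T},\mathcal{T}\rangle \mid \omega_1\mathcal{T} \mid \omega_2\mathcal{T} \mid \mu a.\mathcal{T} \mid (a\ \mathcal{T})$ and $\mathcal{E} ::= \mathcal{T} \mid \pi_1 \mid \pi_2 \mid [x.\mathcal{T}, y.\mathcal{T}]$. Typing judgements $\Gamma\vdash t:A;\Delta$ are generated by: $\Gamma,x:A\vdash x:A;\Delta$; from $\Gamma,x:A\vdash t:B;\Delta$ infer $\Gamma\vdash\lambda x.t:A\to B;\Delta$; from $\Gamma\vdash u:A\to B;\Delta$ and $\Gamma\vdash v:A;\Delta$ infer $\Gamma\vdash(u\ v):B;\Delta$; from $\Gamma\vdash u:A;\Delta$, $\Gamma\vdash v:B;\Delta$ infer $\Gamma\vdash\langle u,v\rangle:A\wedge B;\Delta$; from $\Gamma\vdash t:A\wedge B;\Delta$ infer $\Gamma\vdash(t\ \pi_1):A;\Delta$ and $\Gamma\vdash(t\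 \pi_2):B;\Delta$; from $\Gamma\vdash t:A;\Delta$ infer $\Gamma\vdash\omega_1t:A\vee B;\Delta$; from $\Gamma\vdash t:B;\Delta$ infer $\Gamma\vdash\omega_2t:A\vee B;\Delta$; from $\Gamma\vdash t:A\vee B;\Delta$, $\Gamma,x:A\vdash u:C;\Delta$, $\Gamma,y:B\vdash v:C;\Delta$ infer $\Gamma\vdash(t\ [x.u,y.v]):C;\Delta$; from $\Gamma\vdash t:A;\Delta,a:A$ infer $\Gamma\vdash(a\ t):\perp;\Delta,a:A$; from $\Gamma\vdash t:\perp;\Delta,a:A$ infer $\Gamma\vdash\mu a.t:A;\Delta$. A closed term of type $A$ is one with $\vdash T:A$ (empty contexts). Reduction $\triangleright$ is the compatible closure of: $(\lambda x.u\ v)\triangleright u[x:=v]$; $(\langle t_1,t_2\rangle\ \pi_i)\triangleright t_i$; $(\omega_i t\ [x_1.u_1,x_2.u_2])\triangleright u_i[x_i:=t]$; $((t\ [x_1.u_1,x_2.u_2])\ \varepsilon)\triangleright(t\ [x_1.(u_1\ \varepsilon),x_2.(u_2\ \varepsilon)])$; $(\mu a.t\ \varepsilon)\triangleright\mu a.t[a:=^*\varepsilon]$ ($t[a:=^*\varepsilon]$ replaces inductively each subterm $(a\ v)$ by $(a\ (v\ \varepsilon))$); $\triangleright^*$ is its reflexive-transitive closure. $\mathcal{E}^{<\omega}$ is the set of finite sequences of $\mathcal{E}$-terms; for $\bar w=w_1\dots w_n$, $(t\ \bar w)$ is $t$ if $n=0$ and $((t\ w_1)\ w_2\dots w_n)$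 otherwise. For a term $t$, $M_t$ is the smallest set containing $t$ such that if $u\in M_t$ and $a\in\mathcal{A}$ then $\mu a.u\in M_t$ and $(a\ u)\in M_t$; $\underline{\mu}.t$ denotes an (unspecified) element of $M_t$, and ''$s\triangleright^*\underline{\mu}.t$'' means $s\triangleright^* w$ for some $w\in M_t$. *)

(* Lambda-mu calculus with conjunction and disjunction,
   presented with de Bruijn indices (two independent index spaces:
   lambda-variables and mu-variables). *)
From Stdlib Require Import Arith List Relations.
Import ListNotations.

Inductive form : Type :=
| PVar (p : nat)
| Bot
| Imp (A B : form)
| And (A B : form)
| Or  (A B : form).

(* Terms T and E-terms. Binders:
   Lam t binds lambda-index 0 in t;
   Case u v binds lambda-index 0 in u and in v ([x.u, y.v]);
   Mu t binds mu-index 0 in t;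
   Ctrl a t is (a t) with a a mu-index. *)
Inductive term : Type :=
| Var (n : nat)
| Lam (t : term)
| App (t : term) (e : eterm)
| Pair (t1 t2 : term)
| Inj1 (t : term)
| Inj2 (t : term)
| Mu (t : term)
| Ctrl (a : nat) (t : term)
with eterm : Type :=
| ETm (t : term)
| Proj1
| Proj2
| Case (u v : term).

Fixpoint lshift (c : nat) (t : term) : term :=
  match t with
  | Var n => if n <? c then Var n else Var (S n)
  | Lam u => Lam (lshift (S c) u)
  | App u e => App (lshift c u) (lshift_e c e)
  | Pair u v => Pair (lshift c u) (lshift c v)
  | Inj1 u => Inj1 (lshift c u)
  | Inj2 u => Inj2 (lshift c u)
  | Mu u => Mu (lshift c u)
  | Ctrl a u => Ctrl a (lshift c u)
  end
with lshift_e (c : nat) (e : eterm) : eterm :=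
  match e with
  | ETm u => ETm (lshift c u)
  | Proj1 => Proj1
  | Proj2 => Proj2
  | Case u v => Case (lshift (S c) u) (lshift (S c) v)
  end.

Fixpoint mshift (c : nat) (t : term) : term :=
  match t with
  | Var n => Var n
  | Lam u => Lam (mshift c u)
  | App u e => App (mshift c u) (mshift_e c e)
  | Pair u v => Pair (mshift c u) (mshift c v)
  | Inj1 u => Inj1 (mshift c u)
  | Inj2 u => Inj2 (mshift c u)
  | Mu u => Mu (mshift (S c) u)
  | Ctrl a u => Ctrl (if a <? c then a else S a) (mshift c u)
  end
with mshift_e (c : nat) (e : eterm) : eterm :=
  match e with
  | ETm u => ETm (mshift c u)
  | Proj1 => Proj1
  | Proj2 => Proj2
  | Case u v => Case (mshift c u) (mshift c v)
  end.

Fixpoint lsubst (k : nat) (v : term) (t : term) : term :=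
  match t with
  | Var n => if n =? k then v else if n <? k then Var n else Var (pred n)
  | Lam u => Lam (lsubst (S k) (lshift 0 v) u)
  | App u e => App (lsubst k v u) (lsubst_e k v e)
  | Pair u w => Pair (lsubst k v u) (lsubst k v w)
  | Inj1 u => Inj1 (lsubst k v u)
  | Inj2 u => Inj2 (lsubst k v u)
  | Mu u => Mu (lsubst k (mshift 0 v) u)
  | Ctrl a u => Ctrl a (lsubst k v u)
  end
with lsubst_e (k : nat) (v : term) (e : eterm) : eterm :=
  match e with
  | ETm u => ETm (lsubst k v u)
  | Proj1 => Proj1
  | Proj2 => Proj2
  | Case u w => Case (lsubst (S k) (lshift 0 v) u) (lsubst (S k) (lshift 0 v) w)
  end.

Fixpoint ssub (k : nat) (eps : eterm) (t : term) : term :=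
  match t with
  | Var n => Var n
  | Lam u => Lam (ssub k (lshift_e 0 eps) u)
  | App u e => App (ssub k eps u) (ssub_e k eps e)
  | Pair u w => Pair (ssub k eps u) (ssub k eps w)
  | Inj1 u => Inj1 (ssub k eps u)
  | Inj2 u => Inj2 (ssub k eps u)
  | Mu u => Mu (ssub (S k) (mshift_e 0 eps) u)
  | Ctrl a u =>
      if a =? k then Ctrl a (App (ssub k eps u) eps) else Ctrl a (ssub k eps u)
  end
with ssub_e (k : nat) (eps : eterm) (e : eterm) : eterm :=
  match e with
  | ETm u => ETm (ssub k eps u)
  | Proj1 => Proj1
  | Proj2 => Proj2
  | Case u w => Case (ssub k (lshift_e 0 eps) u) (ssub k (lshift_e 0 eps) w)
  end.

(* Typing  G |- t : A ; D  (G: lambda context, D: mu context, index 0 first) *)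
Inductive ty : list form -> list form -> term -> form -> Prop :=
| ty_var G D n A : nth_error G n = Some A -> ty G D (Var n) A
| ty_lam G D A B t : ty (A :: G) D t B -> ty G D (Lam t) (Imp A B)
| ty_app G D A B u v : ty G D u (Imp A B) -> ty G D v A -> ty G D (App u (ETm v)) B
| ty_pair G D A B u v : ty G D u A -> ty G D v B -> ty G D (Pair u v) (And A B)
| ty_proj1 G D A B t : ty G D t (And A B) -> ty G D (App t Proj1) A
| ty_proj2 G D A B t : ty G D t (And A B) -> ty G D (App t Proj2) B
| ty_inj1 G D A B t : ty G D t A -> ty G D (Inj1 t) (Or A B)
| ty_inj2 G D A B t : ty G D t B -> ty G D (Inj2 t) (Or A B)
| ty_case G D A B C t u v :
    ty G D t (Or A B) -> ty (A :: G) D u C -> ty (B :: G) D v C ->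
    ty G D (App t (Case u v)) C
| ty_ctrl G D a A t : nth_error D a = Some A -> ty G D t A -> ty G D (Ctrl a t) Bot
| ty_mu G D A t : ty G (A :: D) t Bot -> ty G D (Mu t) A.

Inductive step : term -> term -> Prop :=
| st_beta u v : step (App (Lam u) (ETm v)) (lsubst 0 v u)
| st_proj1 t1 t2 : step (App (Pair t1 t2) Proj1) t1
| st_proj2 t1 t2 : step (App (Pair t1 t2) Proj2) t2
| st_case1 t u1 u2 : step (App (Inj1 t) (Case u1 u2)) (lsubst 0 t u1)
| st_case2 t u1 u2 : step (App (Inj2 t) (Case u1 u2)) (lsubst 0 t u2)
| st_perm t u1 u2 e :
    step (App (App t (Case u1 u2)) e)
         (App t (Case (App u1 (lshift_e 0 e)) (App u2 (lshift_e 0 e))))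
| st_mu t e : step (App (Mu t) e) (Mu (ssub 0 (mshift_e 0 e) t))
| st_lam t t' : step t t' -> step (Lam t) (Lam t')
| st_appl t t' e : step t t' -> step (App t e) (App t' e)
| st_appr t e e' : estep e e' -> step (App t e) (App t e')
| st_pairl t t' u : step t t' -> step (Pair t u) (Pair t' u)
| st_pairr t u u' : step u u' -> step (Pair t u) (Pair t u')
| st_inj1 t t' : step t t' -> step (Inj1 t) (Inj1 t')
| st_inj2 t t' : step t t' -> step (Inj2 t) (Inj2 t')
| st_mu_c t t' : step t t' -> step (Mu t) (Mu t')
| st_ctrl a t t' : step t t' -> step (Ctrl a t) (Ctrl a t')
with estep : eterm -> eterm -> Prop :=
| es_tm t t' : step t t' -> estep (ETm t) (ETm t')
| es_casel u u' v : step u u' -> estep (Case u v) (Case u' v)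
| es_caser u v v' : step v v' -> estep (Case u v) (Case u v').

Definition red : term -> term -> Prop := clos_refl_trans term step.

Definition apps (t : term) (ws : list eterm) : term := fold_left App ws t.

(* Binders a are taken fresh for t (capture-avoiding,
   Barendregt convention), so under a Mu the free mu-indices of t are shifted. *)
Inductive inM : term -> term -> Prop :=
| inM_base t : inM t t
| inM_mu t u : inM (mshift 0 t) u -> inM t (Mu u)
| inM_ctrl t a u : inM t u -> inM t (Ctrl a u).

(* The proof is a realizability argument.  For a fixed t, the "pole" of t is
   the set of terms reducing to an element of M_t; every type A is
   interpreted by a set of stacks (stk A): the empty stack for Bot, all
   stacks for a propositional variable, and eliminators applied to realizers
   for the connectives; a realizer of A sends every A-stack into the pole.
   Going under a mu-binder shifts the mu-indices of t, so realizers and stacks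
   are required to be stable under arbitrarily many mu-shifts.

   Adequacy then states
   that each typing rule preserves semantic typing (sound_* lemmas).  Since
   t itself realizes Bot for the pole of t, the stack t :: us is a stack of
   Bot -> P, and adequacy for T yields the theorem. *)

From Stdlib Require Import List Arith Lia Relations.
Import ListNotations.

Scheme term_ind2 := Induction for term Sort Prop
with eterm_ind2 := Induction for eterm Sort Prop.
Combined Scheme term_eterm_ind from term_ind2, eterm_ind2.

Ltac split_index_tests := repeat (simpl; match goal with
  | |- context[?a =? ?b] => destruct (Nat.eqb_spec a b)
  | |- context[?a <? ?b] => destruct (Nat.ltb_spec a b)
  | |- context[match ?k with 0 => _ | S _ => _ end] => destruct k
  end); simpl.

Ltac index_arith :=
  try reflexivity; try (f_equal; lia); try (exfalso; lia); try (f_equal; f_equal; lia).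

Lemma lshift_lshift :
  (forall x c d, c <= d -> lshift (S d) (lshift c x) = lshift c (lshift d x)) /\
  (forall e c d, c <= d -> lshift_e (S d) (lshift_e c e) = lshift_e c (lshift_e d e)).
Proof.
  apply term_eterm_ind; intros; simpl; try (f_equal; auto with arith; fail).
  split_index_tests; index_arith.
Qed.

Lemma mshift_mshift :
  (forall x c d, c <= d -> mshift (S d) (mshift c x) = mshift c (mshift d x)) /\
  (forall e c d, c <= d -> mshift_e (S d) (mshift_e c e) = mshift_e c (mshift_e d e)).
Proof.
  apply term_eterm_ind; intros; simpl; try (f_equal; auto with arith; fail).
  f_equal; [split_index_tests; index_arith | auto].
Qed.

Lemma lshift_mshift :
  (forall x c d, lshift d (mshift c x) = mshift c (lshift d x)) /\
  (forall e c d, lshift_e d (mshift_e c e) = mshift_e c (lshift_e d e)).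
Proof.
  apply term_eterm_ind; intros; simpl; try (f_equal; auto with arith; fail).
  split_index_tests; index_arith.
Qed.

(** Substituting for a variable that does not occur cancels the shift. *)
Lemma lsubst_lshift :
  (forall x k v, lsubst k v (lshift k x) = x) /\
  (forall e k v, lsubst_e k v (lshift_e k e) = e).
Proof.
  apply term_eterm_ind; intros; simpl; try (f_equal; auto with arith; fail).
  split_index_tests; index_arith.
Qed.

Lemma lsubst_lshift_comm :
  (forall x k d v, d <= k ->
     lsubst (S k) (lshift d v) (lshift d x) = lshift d (lsubst k v x)) /\
  (forall e k d v, d <= k ->
     lsubst_e (S k) (lshift d v) (lshift_e d e) = lshift_e d (lsubst_e k v e)).
Proof.
  apply term_eterm_ind; intros; simpl; try (f_equal; auto with arith; fail).
  - split_index_tests; index_arith.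
  - f_equal. rewrite <- (proj1 lshift_lshift) by lia. apply H; lia.
  - f_equal. rewrite <- (proj1 lshift_mshift). auto.
  - f_equal; rewrite <- (proj1 lshift_lshift) by lia; [apply H | apply H0]; lia.
Qed.

Lemma lsubst_mshift :
  (forall x k c v, lsubst k (mshift c v) (mshift c x) = mshift c (lsubst k v x)) /\
  (forall e k c v, lsubst_e k (mshift c v) (mshift_e c e) = mshift_e c (lsubst_e k v e)).
Proof.
  apply term_eterm_ind; intros; simpl; try (f_equal; auto with arith; fail).
  - split_index_tests; index_arith.
  - f_equal. rewrite (proj1 lshift_mshift). auto.
  - f_equal. rewrite <- (proj1 mshift_mshift) by lia. auto.
  - f_equal; rewrite (proj1 lshift_mshift); auto.
Qed.

(** The mu-variable [k] does not occur in [mshift k x], so a structural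
    substitution for it is the identity there. *)
Lemma ssub_mshift_fresh :
  (forall x k eps, ssub k eps (mshift k x) = mshift k x) /\
  (forall e k eps, ssub_e k eps (mshift_e k e) = mshift_e k e).
Proof.
  apply term_eterm_ind; intros; simpl; try (f_equal; auto with arith; fail).
  split_index_tests; index_arith; f_equal; auto.
Qed.

Lemma lshift_ssub :
  (forall x k d eps, lshift d (ssub k eps x) = ssub k (lshift_e d eps) (lshift d x)) /\
  (forall e k d eps,
     lshift_e d (ssub_e k eps e) = ssub_e k (lshift_e d eps) (lshift_e d e)).
Proof.
  apply term_eterm_ind; intros; simpl; try (f_equal; auto with arith; fail).
  - split_index_tests; index_arith.
  - f_equal. rewrite H. f_equal. rewrite (proj2 lshift_lshift) by lia. auto.
  - f_equal. rewrite H. f_equal. rewrite (proj2 lshift_mshift). auto.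
  - split_index_tests; f_equal; simpl; f_equal; auto.
  - f_equal; [rewrite H | rewrite H0]; f_equal;
      rewrite (proj2 lshift_lshift) by lia; auto.
Qed.

(** The renaming of mu-indices performed by [mshift c]. *)
Definition bump (c k : nat) : nat := if k <? c then k else S k.

Lemma bump_eqb c a k : (bump c a =? bump c k) = (a =? k).
Proof.
  apply Bool.eq_true_iff_eq; rewrite !Nat.eqb_eq; unfold bump.
  destruct (Nat.ltb_spec a c), (Nat.ltb_spec k c); lia.
Qed.

Lemma mshift_ssub :
  (forall x k c eps,
     mshift c (ssub k eps x) = ssub (bump c k) (mshift_e c eps) (mshift c x)) /\
  (forall e k c eps,
     mshift_e c (ssub_e k eps e) = ssub_e (bump c k) (mshift_e c eps) (mshift_e c e)).
Proof.
  apply term_eterm_ind; intros; simpl; try (f_equal; auto with arith; fail).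
  - f_equal. rewrite H. f_equal. rewrite (proj2 lshift_mshift). auto.
  - f_equal. rewrite H. f_equal.
    + unfold bump; split_index_tests; index_arith.
    + rewrite (proj2 mshift_mshift) by lia. auto.
  - fold (bump c a). rewrite bump_eqb.
    destruct (a =? k); simpl; f_equal; f_equal; auto.
  - f_equal; [rewrite H | rewrite H0]; f_equal; rewrite (proj2 lshift_mshift); auto.
Qed.

Lemma apps_hom (f : term -> term) (fe : eterm -> eterm) :
  (forall x e, f (App x e) = App (f x) (fe e)) ->
  forall p x, f (apps x p) = apps (f x) (map fe p).
Proof. intros Hf p; induction p; intros x; simpl; [reflexivity | rewrite IHp, Hf; reflexivity]. Qed.

Lemma apps_cons x e p : apps x (e :: p) = apps (App x e) p.
Proof. reflexivity. Qed.

Lemma apps_app x p q : apps x (p ++ q) = apps (apps x p) q.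
Proof. apply fold_left_app. Qed.

(** Generalized substitution [gsub xi s r t]: every lambda-variable [n] is
    replaced by [s n], and every subterm [(a u)] becomes [(xi a) (u (r a))],
    i.e. the mu-variable is renamed by [xi] and its argument receives the
    stack [r a]. It subsumes the substitution of an environment of realizers
    and the accumulation of structural substitutions under a [Mu]. *)
Definition liftL (s : nat -> term) (n : nat) : term :=
  match n with 0 => Var 0 | S n => lshift 0 (s n) end.
Definition liftLS (r : nat -> list eterm) (a : nat) : list eterm :=
  map (lshift_e 0) (r a).
Definition liftX (xi : nat -> nat) (a : nat) : nat :=
  match a with 0 => 0 | S a => S (xi a) end.
Definition liftM (q : list eterm) (r : nat -> list eterm) (a : nat) : list eterm :=
  match a with 0 => map (mshift_e 0) q | S a => map (mshift_e 0) (r a) end.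

Fixpoint gsub (xi : nat -> nat) (s : nat -> term) (r : nat -> list eterm)
  (t : term) : term :=
  match t with
  | Var n => s n
  | Lam u => Lam (gsub xi (liftL s) (liftLS r) u)
  | App u e => App (gsub xi s r u) (gsub_e xi s r e)
  | Pair u v => Pair (gsub xi s r u) (gsub xi s r v)
  | Inj1 u => Inj1 (gsub xi s r u)
  | Inj2 u => Inj2 (gsub xi s r u)
  | Mu u => Mu (gsub (liftX xi) (fun n => mshift 0 (s n)) (liftM nil r) u)
  | Ctrl a u => Ctrl (xi a) (apps (gsub xi s r u) (r a))
  end
with gsub_e (xi : nat -> nat) (s : nat -> term) (r : nat -> list eterm)
  (e : eterm) : eterm :=
  match e with
  | ETm u => ETm (gsub xi s r u)
  | Proj1 => Proj1
  | Proj2 => Proj2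
  | Case u v => Case (gsub xi (liftL s) (liftLS r) u) (gsub xi (liftL s) (liftLS r) v)
  end.

Lemma gsub_ext :
  (forall t xi s r xi' s' r', (forall a, xi a = xi' a) -> (forall n, s n = s' n) ->
     (forall a, r a = r' a) -> gsub xi s r t = gsub xi' s' r' t) /\
  (forall e xi s r xi' s' r', (forall a, xi a = xi' a) -> (forall n, s n = s' n) ->
     (forall a, r a = r' a) -> gsub_e xi s r e = gsub_e xi' s' r' e).
Proof.
  apply term_eterm_ind; intros; simpl; try (f_equal; eauto; fail).
  - f_equal; apply H; auto; intros [|n]; unfold liftLS; simpl;
      rewrite ?H1, ?H2; auto.
  - f_equal; apply H; intros [|n]; simpl; rewrite ?H0, ?H1, ?H2; auto.
  - rewrite H0, H2; f_equal; f_equal; eauto.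
  - f_equal; [apply H | apply H0]; auto; intros [|n]; unfold liftLS; simpl;
      rewrite ?H2, ?H3; auto.
Qed.

Lemma gsub_id :
  (forall t xi s r, (forall a, xi a = a) -> (forall n, s n = Var n) ->
     (forall a, r a = nil) -> gsub xi s r t = t) /\
  (forall e xi s r, (forall a, xi a = a) -> (forall n, s n = Var n) ->
     (forall a, r a = nil) -> gsub_e xi s r e = e).
Proof.
  apply term_eterm_ind; intros; simpl; try (f_equal; eauto; fail).
  - f_equal; apply H; auto; intros [|n]; unfold liftLS; simpl; rewrite ?H1, ?H2; auto.
  - f_equal; apply H; intros [|n]; simpl; rewrite ?H0, ?H1, ?H2; auto.
  - rewrite H0, H2; simpl; f_equal; eauto.
  - f_equal; [apply H | apply H0]; auto; intros [|n]; unfold liftLS; simpl;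
      rewrite ?H2, ?H3; auto.
Qed.

Lemma liftL_comm (f g : term -> term) (s : nat -> term) :
  f (Var 0) = Var 0 -> (forall x, f (lshift 0 x) = lshift 0 (g x)) ->
  forall n, f (liftL s n) = liftL (fun i => g (s i)) n.
Proof. intros H0 HS [|n]; simpl; auto. Qed.

Lemma liftLS_comm (f g : eterm -> eterm) (r : nat -> list eterm) :
  (forall e, f (lshift_e 0 e) = lshift_e 0 (g e)) ->
  forall a, map f (liftLS r a) = liftLS (fun b => map g (r b)) a.
Proof. intros H a; unfold liftLS; rewrite !map_map; apply map_ext; auto. Qed.

Lemma gsub_mshift :
  (forall t c xi s r, mshift c (gsub xi s r t) =
     gsub (fun a => bump c (xi a)) (fun n => mshift c (s n))
          (fun a => map (mshift_e c) (r a)) t) /\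
  (forall e c xi s r, mshift_e c (gsub_e xi s r e) =
     gsub_e (fun a => bump c (xi a)) (fun n => mshift c (s n))
            (fun a => map (mshift_e c) (r a)) e).
Proof.
  assert (HL : forall c s n, mshift c (liftL s n) = liftL (fun i => mshift c (s i)) n)
    by (intros; apply liftL_comm; [reflexivity | intros; symmetry; apply lshift_mshift]).
  assert (HS : forall c r a,
    map (mshift_e c) (liftLS r a) = liftLS (fun b => map (mshift_e c) (r b)) a)
    by (intros; apply liftLS_comm; intros; symmetry; apply lshift_mshift).
  apply term_eterm_ind; intros; simpl; try (f_equal; eauto; fail).
  - f_equal; rewrite H; apply (proj1 gsub_ext); auto.
  - f_equal; rewrite H; apply (proj1 gsub_ext).
    + intros [|a]; unfold bump; simpl; split_index_tests; index_arith.
    + intros n; apply (proj1 mshift_mshift); lia.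
    + intros [|a]; simpl; auto. rewrite !map_map; apply map_ext; intros.
      apply (proj2 mshift_mshift); lia.
  - rewrite (apps_hom (mshift c) (mshift_e c)), H by reflexivity. reflexivity.
  - f_equal; [rewrite H | rewrite H0]; apply (proj1 gsub_ext); auto.
Qed.

Lemma gsub_lsubst :
  (forall t k v xi s r, lsubst k v (gsub xi s r t) =
     gsub xi (fun n => lsubst k v (s n)) (fun a => map (lsubst_e k v) (r a)) t) /\
  (forall e k v xi s r, lsubst_e k v (gsub_e xi s r e) =
     gsub_e xi (fun n => lsubst k v (s n)) (fun a => map (lsubst_e k v) (r a)) e).
Proof.
  assert (HL : forall k v s n, lsubst (S k) (lshift 0 v) (liftL s n) =
                              liftL (fun i => lsubst k v (s i)) n)
    by (intros; apply liftL_comm; [reflexivity | intros; apply lsubst_lshift_comm; lia]).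
  assert (HS : forall k v r a, map (lsubst_e (S k) (lshift 0 v)) (liftLS r a) =
                               liftLS (fun b => map (lsubst_e k v) (r b)) a)
    by (intros; apply liftLS_comm; intros; apply lsubst_lshift_comm; lia).
  apply term_eterm_ind; intros; simpl; try (f_equal; eauto; fail).
  - f_equal; rewrite H; apply (proj1 gsub_ext); auto.
  - f_equal; rewrite H; apply (proj1 gsub_ext); auto.
    + intros n; apply lsubst_mshift.
    + intros [|a]; simpl; auto. rewrite !map_map; apply map_ext; intros.
      apply lsubst_mshift.
  - rewrite (apps_hom (lsubst k v) (lsubst_e k v)), H by reflexivity. reflexivity.
  - f_equal; [rewrite H | rewrite H0]; apply (proj1 gsub_ext); auto.
Qed.

Lemma gsub_ssub :
  (forall t k eps xi s r, ssub k eps (gsub xi s r t) =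
     gsub xi (fun n => ssub k eps (s n))
       (fun a => map (ssub_e k eps) (r a) ++ (if xi a =? k then [eps] else [])) t) /\
  (forall e k eps xi s r, ssub_e k eps (gsub_e xi s r e) =
     gsub_e xi (fun n => ssub k eps (s n))
       (fun a => map (ssub_e k eps) (r a) ++ (if xi a =? k then [eps] else [])) e).
Proof.
  assert (HL : forall k eps s n, ssub k (lshift_e 0 eps) (liftL s n) =
                                 liftL (fun i => ssub k eps (s i)) n)
    by (intros; apply liftL_comm; [reflexivity | intros; symmetry; apply lshift_ssub]).
  assert (HS : forall k eps (b : bool) r a,
    map (ssub_e k (lshift_e 0 eps)) (liftLS r a) ++
      (if b then [lshift_e 0 eps] else []) =
    map (lshift_e 0) (map (ssub_e k eps) (r a) ++ (if b then [eps] else []))).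
  { intros; unfold liftLS; rewrite map_app, !map_map; f_equal.
    - apply map_ext; intros; symmetry; apply lshift_ssub.
    - destruct b; reflexivity. }
  apply term_eterm_ind; intros; simpl; try (f_equal; eauto; fail).
  - f_equal; rewrite H; apply (proj1 gsub_ext); auto.
  - f_equal; rewrite H; apply (proj1 gsub_ext); auto.
    + intros n. symmetry; apply (proj1 mshift_ssub).
    + intros [|a]; simpl; auto. rewrite map_app, !map_map. f_equal.
      * apply map_ext; intros; symmetry; apply (proj2 mshift_ssub).
      * destruct (xi a =? k); auto.
  - rewrite (apps_hom (ssub k eps) (ssub_e k eps)), H by reflexivity.
    destruct (xi a =? k); simpl.
    + rewrite apps_app. reflexivity.
    + rewrite app_nil_r. reflexivity.
  - f_equal; [rewrite H | rewrite H0]; apply (proj1 gsub_ext); auto.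
Qed.

Lemma red_ctx (f : term -> term) : (forall x y, step x y -> step (f x) (f y)) ->
  forall x y, red x y -> red (f x) (f y).
Proof.
  intros Hf x y H; induction H; [apply rt_step, Hf; auto | apply rt_refl | eapply rt_trans; eauto].
Qed.

Lemma red_apps p x y : red x y -> red (apps x p) (apps y p).
Proof.
  apply red_ctx. induction p as [|e p IH]; simpl; intros; auto. apply IH. constructor; auto.
Qed.

Lemma red_case_stack p : forall x u1 u2,
  red (apps (App x (Case u1 u2)) p)
      (App x (Case (apps u1 (map (lshift_e 0) p)) (apps u2 (map (lshift_e 0) p)))).
Proof.
  induction p as [|e p IH]; simpl; intros.
  - apply rt_refl.
  - eapply rt_trans; [apply red_apps, rt_step, st_perm | apply IH].
Qed.

Lemma red_mu_stack xi s r u p : forall q,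
  red (apps (Mu (gsub (liftX xi) (fun n => mshift 0 (s n)) (liftM q r) u)) p)
      (Mu (gsub (liftX xi) (fun n => mshift 0 (s n)) (liftM (q ++ p) r) u)).
Proof.
  induction p as [|e p IH]; simpl; intros.
  - rewrite app_nil_r; apply rt_refl.
  - eapply rt_trans; [apply red_apps, rt_step, st_mu|].
    rewrite (proj1 gsub_ssub).
    replace (q ++ e :: p) with ((q ++ [e]) ++ p) by (rewrite <- app_assoc; reflexivity).
    erewrite (proj1 gsub_ext); [apply IH | | |]; intros; auto.
    + apply ssub_mshift_fresh.
    + destruct a; simpl.
      * rewrite map_app, map_map. f_equal. apply map_ext; intros; apply ssub_mshift_fresh.
      * rewrite map_map, app_nil_r. apply map_ext; intros; apply ssub_mshift_fresh.
Qed.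

Definition msh (n : nat) (t : term) : term := Nat.iter n (mshift 0) t.
Definition mshe (n : nat) (e : eterm) : eterm := Nat.iter n (mshift_e 0) e.
Definition mshs (n : nat) (p : list eterm) : list eterm := map (mshe n) p.

Lemma iter_comm {A B : Type} (f : A -> A) (g : B -> B) (h : A -> B) :
  (forall x, h (f x) = g (h x)) -> forall n x, h (Nat.iter n f x) = Nat.iter n g (h x).
Proof. intros H n x; induction n; simpl; [reflexivity | rewrite H, IHn; reflexivity]. Qed.

Lemma msh_add m n x : msh m (msh n x) = msh (m + n) x.
Proof. symmetry; apply Nat.iter_add. Qed.

Lemma mshs_add m n p : mshs m (mshs n p) = mshs (m + n) p.
Proof.
  unfold mshs; rewrite map_map; apply map_ext; intros; symmetry; apply Nat.iter_add.
Qed.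

Lemma mshs0 p : mshs 0 p = p.
Proof. apply map_id. Qed.

Lemma mshe_ETm n v : mshe n (ETm v) = ETm (msh n v).
Proof. symmetry; apply (iter_comm (mshift 0) (mshift_e 0) ETm); reflexivity. Qed.

Lemma mshe_Proj1 n : mshe n Proj1 = Proj1.
Proof. induction n; unfold mshe in *; simpl; [|rewrite IHn]; reflexivity. Qed.

Lemma mshe_Proj2 n : mshe n Proj2 = Proj2.
Proof. induction n; unfold mshe in *; simpl; [|rewrite IHn]; reflexivity. Qed.

Lemma mshe_Case n u v : mshe n (Case u v) = Case (msh n u) (msh n v).
Proof. induction n; unfold mshe in *; simpl; [|rewrite IHn]; reflexivity. Qed.

Lemma msh_Var n i : msh n (Var i) = Var i.
Proof. induction n; unfold msh in *; simpl; [|rewrite IHn]; reflexivity. Qed.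

Lemma msh_apps n p x : msh n (apps x p) = apps (msh n x) (mshs n p).
Proof.
  revert p x; induction n; intros p x.
  - symmetry; apply (f_equal (apps x)), mshs0.
  - change (mshift 0 (msh n (apps x p)) = apps (mshift 0 (msh n x)) (mshs (S n) p)).
    rewrite IHn, (apps_hom (mshift 0) (mshift_e 0)) by reflexivity.
    unfold mshs; rewrite map_map; reflexivity.
Qed.

Lemma msh_lshift n x : msh n (lshift 0 x) = lshift 0 (msh n x).
Proof. symmetry; apply (iter_comm _ _ (lshift 0)); intros; apply lshift_mshift. Qed.

Lemma mshs_lshift n p : mshs n (map (lshift_e 0) p) = map (lshift_e 0) (mshs n p).
Proof.
  unfold mshs; rewrite !map_map; apply map_ext; intros.
  symmetry; apply (iter_comm _ _ (lshift_e 0)); intros; apply lshift_mshift.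
Qed.

Lemma gsub_msh n : forall t xi s r, msh n (gsub xi s r t) =
  gsub (fun a => Nat.iter n S (xi a)) (fun i => msh n (s i)) (fun a => mshs n (r a)) t.
Proof.
  induction n; intros.
  - apply (proj1 gsub_ext); intros; auto. symmetry; apply mshs0.
  - change (mshift 0 (msh n (gsub xi s r t)) =
      gsub (fun a => S (Nat.iter n S (xi a))) (fun i => mshift 0 (msh n (s i)))
           (fun a => mshs (S n) (r a)) t).
    rewrite IHn, (proj1 gsub_mshift). apply (proj1 gsub_ext); intros; auto.
    unfold mshs; rewrite map_map; reflexivity.
Qed.

Definition scons (v : term) (s : nat -> term) (n : nat) : term :=
  match n with 0 => v | S n => s n end.

Lemma gsub_beta v xi s r u :
  lsubst 0 v (gsub xi (liftL s) (liftLS r) u) = gsub xi (scons v s) r u.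
Proof.
  rewrite (proj1 gsub_lsubst). apply (proj1 gsub_ext); intros; auto.
  - destruct n; simpl; auto. apply lsubst_lshift.
  - unfold liftLS; rewrite map_map. rewrite <- (map_id (r a)) at 2.
    apply map_ext; intros; apply lsubst_lshift.
Qed.

Lemma gsub_beta_msh w n xi s r u :
  lsubst 0 w (msh n (gsub xi (liftL s) (liftLS r) u)) =
  gsub (fun a => Nat.iter n S (xi a)) (scons w (fun i => msh n (s i)))
       (fun a => mshs n (r a)) u.
Proof.
  rewrite gsub_msh, <- gsub_beta. f_equal. apply (proj1 gsub_ext); intros; auto.
  - destruct n0; simpl; [apply msh_Var | apply msh_lshift].
  - apply mshs_lshift.
Qed.

Definition pole (t s : term) : Prop := exists w, inM t w /\ red s w.

Lemma pole_red_back t s s' : red s s' -> pole t s' -> pole t s.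
Proof. intros H [w [Hw Hr]]; exists w; split; auto; eapply rt_trans; eauto. Qed.

Lemma pole_mu t s : pole (mshift 0 t) s -> pole t (Mu s).
Proof.
  intros [w [Hw Hr]]; exists (Mu w); split; [constructor; auto|].
  apply (red_ctx Mu); auto. intros; constructor; auto.
Qed.

Lemma pole_ctrl t a s : pole t s -> pole t (Ctrl a s).
Proof.
  intros [w [Hw Hr]]; exists (Ctrl a w); split; [constructor; auto|].
  apply (red_ctx (Ctrl a)); auto. intros; constructor; auto.
Qed.

Lemma pole_refl t : pole t t.
Proof. exists t; split; [constructor | apply rt_refl]. Qed.

(** A stack interpretation
    [S : term -> list eterm -> Prop] gives the stacks of a type relative to
    [t]; since going under a [Mu] shifts [t], realizers and stacks are
    required to remain so after any number of mu-shifts. *)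
Definition stable_stack (S : term -> list eterm -> Prop) (t : term) (p : list eterm) : Prop :=
  forall n, S (msh n t) (mshs n p).
Definition realizer (S : term -> list eterm -> Prop) (t s : term) : Prop :=
  forall p, stable_stack S t p -> pole t (apps s p).
Definition stable_realizer (S : term -> list eterm -> Prop) (t v : term) : Prop :=
  forall n, realizer S (msh n t) (msh n v).

Fixpoint stk (A : form) : term -> list eterm -> Prop :=
  match A with
  | PVar _ => fun _ _ => True
  | Bot => fun _ p => p = nil
  | Imp A B => fun t p => exists v p', p = ETm v :: p' /\
       stable_realizer (stk A) t v /\ stk B t p'
  | And A B => fun t p => exists p',
       (p = Proj1 :: p' /\ stk A t p') \/ (p = Proj2 :: p' /\ stk B t p')
  | Or A B => fun t p => exists u1 u2, p = [Case u1 u2] /\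
       (forall v, stable_realizer (stk A) t v -> pole t (lsubst 0 v u1)) /\
       (forall v, stable_realizer (stk B) t v -> pole t (lsubst 0 v u2))
  end.

Lemma stable_realizer_msh S t v m :
  stable_realizer S t v -> stable_realizer S (msh m t) (msh m v).
Proof. intros H n. rewrite !msh_add. apply H. Qed.

Lemma stable_stack_msh S t p m :
  stable_stack S t p -> stable_stack S (msh m t) (mshs m p).
Proof. intros H n. rewrite msh_add, mshs_add. apply H. Qed.

Lemma stable_stack_Imp A B t p : stable_stack (stk (Imp A B)) t p ->
  exists v p', p = ETm v :: p' /\ stable_realizer (stk A) t v /\ stable_stack (stk B) t p'.
Proof.
  intros H. destruct (H 0) as [v [p' [E _]]]. rewrite mshs0 in E. subst p.
  exists v, p'; split; auto.
  split; intros n; destruct (H n) as [v2 [p2 [E2 [Hv Hp]]]];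
    simpl in E2; rewrite mshe_ETm in E2; injection E2; intros; subst; auto.
  apply (Hv 0).
Qed.

Lemma stable_stack_And A B t p : stable_stack (stk (And A B)) t p ->
  exists p', (p = Proj1 :: p' /\ stable_stack (stk A) t p') \/
             (p = Proj2 :: p' /\ stable_stack (stk B) t p').
Proof.
  intros H. destruct (H 0) as [p' [[E _]|[E _]]]; rewrite mshs0 in E; subst p; exists p';
    [left | right]; split; auto; intros n; destruct (H n) as [p2 [[E2 H2]|[E2 H2]]];
    simpl in E2; rewrite ?mshe_Proj1, ?mshe_Proj2 in E2; injection E2; intros; subst;
    auto; discriminate.
Qed.

Lemma stable_realizer_self_Bot t : stable_realizer (stk Bot) t t.
Proof.
  intros n p Hp. specialize (Hp 0). simpl in Hp. rewrite mshs0 in Hp. subst p.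
  apply pole_refl.
Qed.

Definition env_ok (G D : list form) (t : term) (s : nat -> term) (r : nat -> list eterm) : Prop :=
  (forall i B, nth_error G i = Some B -> stable_realizer (stk B) t (s i)) /\
  (forall a B, nth_error D a = Some B -> stable_stack (stk B) t (r a)).

Lemma env_ok_msh G D t s r n : env_ok G D t s r ->
  env_ok G D (msh n t) (fun i => msh n (s i)) (fun a => mshs n (r a)).
Proof.
  intros [HG HD]; split; intros;
    [apply stable_realizer_msh | apply stable_stack_msh]; eauto.
Qed.

Lemma env_ok_cons G D t s r A v : env_ok G D t s r -> stable_realizer (stk A) t v ->
  env_ok (A :: G) D t (scons v s) r.
Proof.
  intros [HG HD] Hv; split; auto.
  intros [|i] B E; simpl in E; [injection E; intros; subst; exact Hv | eauto].
Qed.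

Definition sound (G D : list form) (u : term) (A : form) : Prop :=
  forall t xi s r, env_ok G D t s r -> realizer (stk A) t (gsub xi s r u).

Lemma sound_stable G D u A : sound G D u A ->
  forall t xi s r, env_ok G D t s r -> stable_realizer (stk A) t (gsub xi s r u).
Proof. intros H t xi s r Hh n. rewrite gsub_msh. apply H, env_ok_msh, Hh. Qed.

Lemma sound_var G D n A : nth_error G n = Some A -> sound G D (Var n) A.
Proof. intros E t xi s r Hh. apply (proj1 Hh n A E 0). Qed.

Lemma sound_lam G D A B u : sound (A :: G) D u B -> sound G D (Lam u) (Imp A B).
Proof.
  intros Hu t xi s r Hh p Hp.
  destruct (stable_stack_Imp _ _ _ _ Hp) as [v [p' [E [Hv Hp']]]]; subst p.
  rewrite apps_cons.
  eapply pole_red_back; [apply red_apps, rt_step, st_beta|].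
  rewrite gsub_beta. apply Hu; [apply env_ok_cons|]; auto.
Qed.

Lemma sound_app G D A B u v :
  sound G D u (Imp A B) -> sound G D v A -> sound G D (App u (ETm v)) B.
Proof.
  intros Hu Hv t xi s r Hh p Hp.
  change (pole t (apps (gsub xi s r u) (ETm (gsub xi s r v) :: p))).
  apply Hu; auto. intros n. exists (msh n (gsub xi s r v)), (mshs n p).
  split; [simpl; rewrite mshe_ETm; reflexivity|].
  split; [apply stable_realizer_msh; eapply sound_stable; eauto | apply Hp].
Qed.

Lemma sound_pair G D A B u v :
  sound G D u A -> sound G D v B -> sound G D (Pair u v) (And A B).
Proof.
  intros Hu Hv t xi s r Hh p Hp.
  destruct (stable_stack_And _ _ _ _ Hp) as [p' [[E Hp']|[E Hp']]]; subst p;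
    rewrite apps_cons.
  - eapply pole_red_back; [apply red_apps, rt_step, st_proj1 | apply Hu; auto].
  - eapply pole_red_back; [apply red_apps, rt_step, st_proj2 | apply Hv; auto].
Qed.

Lemma sound_proj1 G D A B u : sound G D u (And A B) -> sound G D (App u Proj1) A.
Proof.
  intros Hu t xi s r Hh p Hp.
  change (pole t (apps (gsub xi s r u) (Proj1 :: p))).
  apply Hu; auto. intros n. exists (mshs n p). left. simpl. rewrite mshe_Proj1. auto.
Qed.

Lemma sound_proj2 G D A B u : sound G D u (And A B) -> sound G D (App u Proj2) B.
Proof.
  intros Hu t xi s r Hh p Hp.
  change (pole t (apps (gsub xi s r u) (Proj2 :: p))).
  apply Hu; auto. intros n. exists (mshs n p). right. simpl. rewrite mshe_Proj2. auto.
Qed.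

Lemma sound_inj1 G D A B u : sound G D u A -> sound G D (Inj1 u) (Or A B).
Proof.
  intros Hu t xi s r Hh p Hp.
  destruct (Hp 0) as [u1 [u2 [E [H1 _]]]]. rewrite mshs0 in E; subst p.
  eapply pole_red_back; [apply rt_step, st_case1|]. apply H1. eapply sound_stable; eauto.
Qed.

Lemma sound_inj2 G D A B u : sound G D u B -> sound G D (Inj2 u) (Or A B).
Proof.
  intros Hu t xi s r Hh p Hp.
  destruct (Hp 0) as [u1 [u2 [E [_ H2]]]]. rewrite mshs0 in E; subst p.
  eapply pole_red_back; [apply rt_step, st_case2|]. apply H2. eapply sound_stable; eauto.
Qed.

Lemma sound_branch G D A C u t xi s r p n w :
  sound (A :: G) D u C -> env_ok G D t s r -> stable_stack (stk C) t p ->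
  stable_realizer (stk A) (msh n t) w ->
  pole (msh n t) (lsubst 0 w (msh n (apps (gsub xi (liftL s) (liftLS r) u)
                                           (map (lshift_e 0) p)))).
Proof.
  intros Hu Hh Hp Hw.
  rewrite msh_apps, mshs_lshift, (apps_hom (lsubst 0 w) (lsubst_e 0 w)) by reflexivity.
  rewrite map_map, (map_ext _ (fun e => e)) by (intros; apply lsubst_lshift).
  rewrite map_id, gsub_beta_msh.
  apply Hu; [apply env_ok_cons; [apply env_ok_msh|] |]; auto. apply stable_stack_msh; auto.
Qed.

Lemma sound_case G D A B C u v1 v2 :
  sound G D u (Or A B) -> sound (A :: G) D v1 C -> sound (B :: G) D v2 C ->
  sound G D (App u (Case v1 v2)) C.
Proof.
  intros Hu Hv1 Hv2 t xi s r Hh p Hp.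
  eapply pole_red_back; [apply red_case_stack|].
  change (pole t (apps (gsub xi s r u)
    [Case (apps (gsub xi (liftL s) (liftLS r) v1) (map (lshift_e 0) p))
          (apps (gsub xi (liftL s) (liftLS r) v2) (map (lshift_e 0) p))])).
  apply Hu; auto. intros n. do 2 eexists.
  split; [simpl; rewrite mshe_Case; reflexivity|].
  split; intros w Hw; eapply sound_branch; eauto.
Qed.

Lemma sound_ctrl G D a A u : nth_error D a = Some A -> sound G D u A -> sound G D (Ctrl a u) Bot.
Proof.
  intros E Hu t xi s r Hh p Hp. specialize (Hp 0). simpl in Hp. rewrite mshs0 in Hp. subst p.
  apply pole_ctrl, Hu; auto. apply (proj2 Hh a A E).
Qed.

(** Under the binder, the stack applied to [Mu u] becomes the stack of its
    bound variable, and the pole shifts from [t] to [mshift 0 t]. *)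
Lemma sound_mu G D A u : sound G (A :: D) u Bot -> sound G D (Mu u) A.
Proof.
  intros Hu t xi s r Hh p Hp.
  eapply pole_red_back; [apply red_mu_stack|]. apply pole_mu.
  change (pole (msh 1 t) (apps (gsub (liftX xi) (fun n => msh 1 (s n)) (liftM p r) u) nil)).
  apply Hu; [|intros n; reflexivity].
  destruct (env_ok_msh _ _ _ _ _ 1 Hh) as [HG HD]. split; auto.
  intros [|a] B E; simpl in E.
  - injection E; intros; subst. exact (stable_stack_msh _ _ _ 1 Hp).
  - exact (HD a B E).
Qed.

Lemma adequacy G D u A : ty G D u A -> sound G D u A.
Proof.
  induction 1; eauto using sound_var, sound_lam, sound_app, sound_pair, sound_proj1,
    sound_proj2, sound_inj1, sound_inj2, sound_case, sound_ctrl, sound_mu.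
Qed.

Theorem mainTheorem6 (p : nat) (T : term)
  (HT : ty nil nil T (Imp Bot (PVar p)))
  (t : term) (us : list eterm) :
  exists w, inM t w /\ red (apps (App T (ETm t)) us) w.
Proof.
  assert (Hempty : env_ok nil nil t Var (fun _ => nil)).
  { split; intros [|i] B E; discriminate. }
  assert (HTr := adequacy _ _ _ _ HT t (fun a => a) Var (fun _ => nil) Hempty).
  rewrite (proj1 gsub_id) in HTr by auto.
  apply (HTr (ETm t :: us)). intros n. exists (msh n t), (mshs n us).
  split; [simpl; rewrite mshe_ETm; reflexivity|].
  split; [apply stable_realizer_msh, stable_realizer_self_Bot | exact I].
Qed.
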